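(* Let $\lambda$ be a dominant integral weight of $\mathfrak{sl}_{r+1}$ and $b\in\mathcal B(\lambda+\rho)$. For $1\le j\le i\le r$, the entry $a_{i,j}$ of the BZL path $\psi_{\mathbf i}(b)$ is boxed by rule (B-I) if and only if the corresponding entry $\mathbf a_{i-j+1,i}$ of $\mathbf a(b)$ is boxed by rule (B-II).
   Context: Fix $r\ge1$ and $\mathfrak g=\mathfrak{sl}_{r+1}$ with index set $I=\{1,\dots,r\}$, fundamental weights $\omega_1,\dots,\omega_r$, $N=r(r+1)/2$, and $\rho=\sum_i\omega_i$. For a dominant integral weight $\mu=\sum_i m_i\omega_i$, $\mathcal B(\mu)$ is identified (Kashiwara–Nakashima) with the set of semistandard Young tableaux with entries in $\{1,\dots,r+1\}$ of the shape having $m_i$ columns of height $i$; an entry equal to $k$ is a $k$-box. A tableau is identified with the tensor product of its entries read column by column from right to left, each column top to bottom, and $\tilde e_i,\tilde f_i$ act by the signature rule: for each factor write $-$ if it equals $i+1$, $+$ if it equals $i$; repeatedly cancel adjacent $+-$ pairs; $\tilde e_i$ changes the factor of the rightmost remaining $-$ from $i+1$ to $i$ (giving $0$ if none), $\tilde f_i$ changes the factor of the leftmost remaining $+$ from $i$ to $i+1$ (giving $0$ if none). For dominant $\lambda$, $\lambda+\rho$ is viewed as the partition with row lengths $\ell_1>\ell_2>\cdots>\ell_r>\ell_{r+1}=0$, and $\theta_i=\ell_i-\ell_{i+1}$ for $1\le i\le r$. Fix the long word $\mathbf i=(i_1,\dots,i_N)=(1,2,1,3,2,1,\dots,r,\dots,2,1)$.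 The BZL path $\psi_{\mathbf i}(b)=(a_1,\dots,a_N)$: $a_k$ is maximal with $\tilde e_{i_k}^{a_k}\cdots\tilde e_{i_1}^{a_1}b\ne0$. Triangular form: $a_{i,j}=a_{i(i-1)/2+j}$ for $1\le j\le i\le r$. Rule (B-I): box $a_k$ if $\tilde f_{i_k}\tilde e_{i_{k-1}}^{a_{k-1}}\cdots\tilde e_{i_1}^{a_1}b=0$. For $b\in\mathcal B(\lambda+\rho)$ and $1\le i\le j\le r$: $\mathbf a_{i,j}$ is the number of $(j+1)$-boxes in rows $1$ through $i$ of $b$; $\mathbf b_{i,j}$ is the number of boxes in the $i$th row of $b$ with entry $\ge j+1$, with convention $\mathbf b_{i,j}=0$ if $i=r+1$ or $j=r+1$. Rule (B-II): box $\mathbf a_{i,j}$ if $\mathbf b_{i,j}\ge\theta_i+\mathbf b_{i+1,j+1}$. *)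

From mathcomp Require Import all_boot.
Set Implicit Arguments. Unset Strict Implicit. Unset Printing Implicit Defensive.

(* A tableau is the list of its rows (row 1 first), each row a list of entries. *)
Definition tableau := seq (seq nat).

(* Dominant weight lambda = sum_i m i * omega_i (only m 1 .. m r matter).
   ell r m i = length of row i of lambda + rho = sum_{k=i}^{r} (m k + 1). *)
Definition ell (r : nat) (m : nat -> nat) (i : nat) : nat :=
  \sum_(i <= k < r.+1) (m k).+1.

Definition theta (r : nat) (m : nat -> nat) (i : nat) : nat :=
  ell r m i - ell r m i.+1.

Definition row (t : tableau) (i : nat) : seq nat := nth [::] t i.-1.  (* 1-indexed *)

(* b \in B(lambda + rho): semistandard tableaux of shape lambda + rho
   with entries in {1, ..., r+1}. *)
Definition in_B_lambda_rho (r : nat) (m : nat -> nat) (t : tableau) : Prop :=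
  [/\ size t = r,
      forall i, 1 <= i <= r -> size (row t i) = ell r m i,
      forall i, 1 <= i <= r -> all (fun x => 1 <= x <= r.+1) (row t i),
      forall i, 1 <= i <= r -> sorted leq (row t i)
    & forall i c, 1 <= i < r -> c < size (row t i.+1) ->
        nth 0 (row t i) c < nth 0 (row t i.+1) c].

(* Positions (row index 0-based, column index 0-based) in reading order:
   columns from right to left, each column from top to bottom. *)
Definition ncols (t : tableau) : nat := foldr maxn 0 (map size t).

Definition positions (t : tableau) : seq (nat * nat) :=
  flatten [seq [seq (p, c) | p <- iota 0 (size t) & c < size (nth [::] t p)]
          | c <- rev (iota 0 (ncols t))].

Definition entry (t : tableau) (pc : nat * nat) : nat :=
  nth 0 (nth [::] t pc.1) pc.2.

Definition reading_word (t : tableau) : seq nat := map (entry t) (positions t).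

Definition update (t : tableau) (pc : nat * nat) (v : nat) : tableau :=
  set_nth [::] t pc.1 (set_nth 0 (nth [::] t pc.1) pc.2 v).

(* Signature rule for index i: a factor equal to i+1 is '-', equal to i is '+'.
   Scanning left to right, each '-' cancels the nearest preceding uncancelled '+'
   (this is the iterated cancellation of adjacent '+-' pairs).
   Returns (uncancelled '+' positions, most recent first;
            uncancelled '-' positions, most recent first). *)
Fixpoint red (i : nat) (w : seq nat) (k : nat) (pl mi : seq nat)
  : seq nat * seq nat :=
  match w with
  | [::] => (pl, mi)
  | x :: w' =>
      if x == i then red i w' k.+1 (k :: pl) mi
      else if x == i.+1 then
        match pl with
        | [::] => red i w' k.+1 pl (k :: mi)
        | _ :: pl' => red i w' k.+1 pl' mi
        end
      else red i w' k.+1 pl mi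
  end.

Definition signature (i : nat) (w : seq nat) := red i w 0 [::] [::].

(* Kashiwara operators on tableaux; None stands for 0. *)
Definition e_tab (i : nat) (t : tableau) : option tableau :=
  match (signature i (reading_word t)).2 with
  | [::] => None
  | k :: _ => Some (update t (nth (0, 0) (positions t) k) i)   (* rightmost '-' *)
  end.

Definition f_tab (i : nat) (t : tableau) : option tableau :=
  match (signature i (reading_word t)).1 with
  | [::] => None
  | pl => Some (update t (nth (0, 0) (positions t) (last 0 pl)) i.+1) (* leftmost '+' *)
  end.

Definition e_pow (i n : nat) (t : tableau) : option tableau :=
  iter n (fun ot => obind (e_tab i) ot) (Some t).

(* Sum of entries: a bound on how often e_i can be applied, since each
   application lowers one entry by 1 and entries stay >= 1. *)
Definition weight_bound (t : tableau) : nat := sumn (map sumn t).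

Definition emax (i : nat) (t : tableau) : nat :=
  \max_(a < (weight_bound t).+1 | e_pow i a t != None) (a : nat).

Definition long_word (r : nat) : seq nat :=
  flatten [seq rev (iota 1 i) | i <- iota 1 r].

(* For each k, the pair (a_k, e_{i_{k-1}}^{a_{k-1}} ... e_{i_1}^{a_1} b). *)
Fixpoint bzl_run (w : seq nat) (t : tableau) : seq (nat * tableau) :=
  match w with
  | [::] => [::]
  | i :: w' => let a := emax i t in (a, t) :: bzl_run w' (odflt t (e_pow i a t))
  end.

Definition bzl_path (r : nat) (t : tableau) : seq nat :=
  map fst (bzl_run (long_word r) t).

(* 0-based position of a_{i,j} = a_{i(i-1)/2 + j} *)
Definition tri_index (i j : nat) : nat := (i * i.-1) %/ 2 + j - 1.

(* Rule (B-I): a_k is boxed iff f_{i_k} e_{i_{k-1}}^{a_{k-1}} ... e_{i_1}^{a_1} b = 0. *)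
Definition boxed_BI (r : nat) (t : tableau) (i j : nat) : bool :=
  let k := tri_index i j in
  f_tab (nth 0 (long_word r) k) (nth (0, t) (bzl_run (long_word r) t) k).2 == None.

Definition bold_a (t : tableau) (i j : nat) : nat :=
  \sum_(1 <= p < i.+1) count (pred1 j.+1) (row t p).

Definition bold_b (r : nat) (t : tableau) (i j : nat) : nat :=
  if (i == r.+1) || (j == r.+1) then 0
  else count (fun x => j.+1 <= x) (row t i).

Definition boxed_BII (r : nat) (m : nat -> nat) (t : tableau) (i j : nat) : bool :=
  theta r m i + bold_b r t i.+1 j.+1 <= bold_b r t i j.

(* The BZL path of a tableau t of shape lambda + rho is computed explicitly.
   For q <= i let [stage t i q] be the tableau obtained from t by replacing,
   in its row p, every entry x <= i by p and every entry i+1 by max p (q+1).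
   Then stage t 0 0 = t and stage t i 0 = stage t (i+1) (i+1); the key step
   (Section StageStep) is that for 1 <= q <= i <= r:
   - applying e_q as often as possible to stage t i q yields stage t i (q-1);
   - f_q (stage t i q) = 0 iff row q of t has at most as many entries <= i
     as row q+1 has entries <= i+1.
   Both facts are read off the signature rule: in the reading word of
   stage t i q, the columns to the right of the entries <= i of row q contain
   no letter q, while each remaining column reads (up to neutral letters) as
   "q" or "q q+1".  Hence the tableau on which a_{i,j} is computed is
   stage t i (i-j+1), so (B-I) becomes a comparison of two row counts, and
   (B-II) is the same comparison rewritten through the row lengths of
   lambda + rho. *)

From mathcomp Require Import all_boot zify.
Set Implicit Arguments. Unset Strict Implicit. Unset Printing Implicit Defensive.

(** * The signature rule on words *)

Definition neutral (q : nat) (u : seq nat) : bool :=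
  all (fun a => (a != q) && (a != q.+1)) u.

Lemma neutral_notin q u : neutral q u -> (q \notin u) && (q.+1 \notin u).
Proof.
move/allP=> H; apply/andP; split; apply/negP=> Hin; have:= H _ Hin;
  by rewrite eqxx ?andbF.
Qed.

Lemma red_cat_neutral q u v k pl mi : neutral q u ->
  red q (u ++ v) k pl mi = red q v (k + size u) pl mi.
Proof.
elim: u k pl mi => [|a u IH] k pl mi /=; first by rewrite addn0.
case/andP=> /andP[/negbTE -> /negbTE ->] Hu.
by rewrite IH // addSnnS.
Qed.

Lemma red_cat_no_plus q u v k mi : q \notin u ->
  exists l, red q (u ++ v) k [::] mi = red q v (k + size u) [::] (l ++ mi).
Proof.
elim: u k mi => [|a u IH] k mi /=; first by exists [::]; rewrite addn0.
rewrite inE negb_or => /andP[Ha Hu].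
rewrite eq_sym (negbTE Ha); case: ifP => _.
  have [l ->] := IH k.+1 (k :: mi) Hu.
  by exists (l ++ [:: k]); rewrite -catA addSnnS.
have [l ->] := IH k.+1 mi Hu.
by exists l; rewrite addSnnS.
Qed.

Lemma red_cat_no_minus q u v k pl mi : q.+1 \notin u ->
  exists pl', red q (u ++ v) k pl mi = red q v (k + size u) pl' mi.
Proof.
elim: u k pl => [|a u IH] k pl /=; first by exists pl; rewrite addn0.
rewrite inE negb_or => /andP[Ha Hu].
rewrite [a == q.+1]eq_sym (negbTE Ha); case: ifP => _.
  have [pl' ->] := IH k.+1 (k :: pl) Hu.
  by exists pl'; rewrite addSnnS.
have [pl' ->] := IH k.+1 pl Hu.
by exists pl'; rewrite addSnnS.
Qed.

Lemma red_last_minus q x1 x2 v k mi :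
  q \notin x1 -> q \notin x2 -> q.+1 \notin x2 ->
  exists l, red q ((x1 ++ q.+1 :: x2) ++ v) k [::] mi =
            red q v (k + size x1 + (size x2).+1) [::] ((k + size x1) :: l ++ mi).
Proof.
move=> H1 H2 H3; rewrite -catA.
have [l ->] := red_cat_no_plus (q.+1 :: x2 ++ v) k mi H1.
exists l => /=; rewrite gtn_eqF // eqxx red_cat_neutral; first by congr red; lia.
by apply/allP=> a Ha; apply/andP; split; apply/negP=> /eqP E; subst a;
  [rewrite Ha in H2 | rewrite Ha in H3].
Qed.

(* A q-block reads "q" or "q q+1" up to neutral letters; it is the shape of
   the relevant columns of a stage tableau. *)
Definition block (q : nat) (u : seq nat) : Prop :=
  exists u1 u3 (b : bool), [/\ u = u1 ++ q :: (if b then q.+1 :: u3 else u3),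
                              neutral q u1 & neutral q u3].

Lemma block_mem q u1 u3 (b : bool) : neutral q u1 -> neutral q u3 ->
  (q.+1 \in u1 ++ q :: (if b then q.+1 :: u3 else u3)) = b.
Proof.
move=> H1 H3; have/andP[_ N1] := neutral_notin H1; have/andP[_ N3] := neutral_notin H3.
rewrite mem_cat (negbTE N1) /= inE gtn_eqF //=.
by case: b => /=; rewrite ?inE ?eqxx // (negbTE N3).
Qed.

Lemma red_cat_block q u v k pl mi : block q u ->
  exists pl', red q (u ++ v) k pl mi = red q v (k + size u) pl' mi /\
     size pl' = size pl + (q.+1 \notin u).
Proof.
case=> u1 [u3] [b] [-> H1 H3].
have/andP[Hq3 Hq13] := neutral_notin H3.
have/andP[Hq1 Hq11] := neutral_notin H1.
rewrite -catA red_cat_neutral //= eqxx.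
case: b => /=.
  rewrite gtn_eqF // eqxx red_cat_neutral //.
  exists pl; split; first by congr red; rewrite size_cat /=; lia.
  by rewrite mem_cat !inE ?eqxx ?orbT /= addn0.
rewrite red_cat_neutral //.
exists ((k + size u1) :: pl); split; first by congr red; rewrite size_cat /=; lia.
by rewrite mem_cat !inE gtn_eqF //= (negbTE Hq11) (negbTE Hq13) /= addn1.
Qed.



Lemma red_cat_blocks q cols v k pl mi : (forall u, u \in cols -> block q u) ->
  exists pl', red q (flatten cols ++ v) k pl mi =
                red q v (k + size (flatten cols)) pl' mi /\
     size pl' = size pl + count (fun u => q.+1 \notin u) cols.
Proof.
elim: cols k pl => [|u cols IH] k pl /= Hall.
  by exists pl; rewrite !addn0.
rewrite -catA.
have [pl1 [-> Hs1]] :=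
  red_cat_block (flatten cols ++ v) k pl mi (Hall u (mem_head _ _)).
have [pl2 [-> Hs2]] := IH (k + size u) pl1 (fun u' Hu' => Hall u' (mem_behead (s := u :: cols) Hu')).
exists pl2; rewrite size_cat addnA; split=> //.
by rewrite Hs2 Hs1 addnA.
Qed.

(** * Positions and reading words of tableaux *)

Lemma entry_update T pc v pc' :
  entry (update T pc v) pc' = if pc' == pc then v else entry T pc'.
Proof.
case: pc => p c; case: pc' => p' c'; rewrite /entry /update /=.
rewrite nth_set_nth /= xpair_eqE.
by case: (p' == p) /eqP => [->|] //=; rewrite nth_set_nth.
Qed.

Definition shape_positions (s : seq nat) : seq (nat * nat) :=
  flatten [seq [seq (p, c) | p <- iota 0 (size s) & c < nth 0 s p]
          | c <- rev (iota 0 (foldr maxn 0 s))].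

Lemma positions_shape T : positions T = shape_positions (map size T).
Proof.
rewrite /positions /shape_positions /ncols size_map.
congr flatten; apply: eq_map => c; congr map.
apply: eq_in_filter => p; rewrite mem_iota /= => Hp.
by rewrite (nth_map [::]).
Qed.

Lemma foldr_maxn_ub (s : seq nat) x : x \in s -> x <= foldr maxn 0 s.
Proof.
elim: s => [|a s IH] //=; rewrite inE => /orP[/eqP->|/IH H].
  exact: leq_maxl.
exact: leq_trans H (leq_maxr _ _).
Qed.

Lemma mem_positions T p c :
  ((p, c) \in positions T) = (p < size T) && (c < size (nth [::] T p)).
Proof.
apply/idP/idP.
  move/flatten_mapP=> [c' _] /mapP [p']; rewrite mem_filter mem_iota /=.
  by case/andP=> Hc Hp [-> ->]; rewrite Hc -(add0n (size T)) Hp.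
case/andP=> Hp Hc; apply/flatten_mapP; exists c.
  rewrite mem_rev mem_iota /=; apply: leq_trans Hc _.
  by apply/foldr_maxn_ub/map_f/mem_nth.
by apply/mapP; exists p => //; rewrite mem_filter mem_iota /= Hc.
Qed.

(* Each column contributes distinct positions, all in that column. *)
Lemma uniq_positions T : uniq (positions T).
Proof.
rewrite /positions.
have : uniq (rev (iota 0 (ncols T))) by rewrite rev_uniq iota_uniq.
elim: (rev _) => [|c s IH] //= /andP[Hc Hs]; rewrite cat_uniq IH // andbT.
rewrite map_inj_uniq ?filter_uniq ?iota_uniq //=; last by move=> a b [].
apply/hasPn => pc /flatten_mapP [c' Hc'] /mapP [p _ ->].
apply/negP => /mapP [p' _ [_ Ec]]; subst c'.
by rewrite Hc' in Hc.
Qed.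

Lemma shape_update T pc v : pc \in positions T ->
  map size (update T pc v) = map size T.
Proof.
case: pc => p c; rewrite mem_positions => /andP[Hp Hc].
rewrite /update /=.
apply: (@eq_from_nth _ 0); rewrite !size_map size_set_nth; first by lia.
move=> n; rewrite (_ : maxn p.+1 (size T) = size T); last by lia.
move=> Hn; rewrite (nth_map [::]); last by rewrite size_set_nth; lia.
rewrite (nth_map [::]) // nth_set_nth /=.
by case: eqP => [->|] //=; rewrite size_set_nth; lia.
Qed.

Lemma positions_update T pc v : pc \in positions T ->
  positions (update T pc v) = positions T.
Proof. by move=> H; rewrite !positions_shape shape_update. Qed.

Lemma size_reading_word T : size (reading_word T) = size (positions T).
Proof. exact: size_map. Qed.

Lemma reading_word_update T k v : k < size (positions T) ->
  reading_word (update T (nth (0,0) (positions T) k) v) =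
  set_nth 0 (reading_word T) k v.
Proof.
move=> Hk; have Hin := mem_nth (0, 0) Hk.
rewrite /reading_word positions_update //.
apply: (@eq_from_nth _ 0) => [|n Hn]; first by rewrite size_set_nth !size_map; lia.
rewrite size_map in Hn.
rewrite (nth_map (0,0)) // nth_set_nth /= entry_update nth_uniq ?uniq_positions //.
by case: eqP => // _; rewrite (nth_map (0,0)).
Qed.

Lemma reading_word_inj T1 T2 : map size T1 = map size T2 ->
  reading_word T1 = reading_word T2 -> T1 = T2.
Proof.
move=> Hs Hw.
have HP : positions T1 = positions T2 by rewrite !positions_shape Hs.
move: Hw; rewrite /reading_word HP => /eq_in_map He.
have Hsz : size T1 = size T2 by rewrite -(size_map size T1) Hs size_map.
apply: (@eq_from_nth _ [::]) => // p Hp.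
have Hr : size (nth [::] T1 p) = size (nth [::] T2 p).
  by rewrite -!(nth_map [::] 0 size) -?Hsz // Hs.
apply: (@eq_from_nth _ 0) => // c Hc.
have := He (p, c); rewrite /entry /= => -> //.
by rewrite mem_positions -Hsz Hp -Hr Hc.
Qed.

Lemma size_le_sumn (s : seq nat) : all (fun x => 0 < x) s -> size s <= sumn s.
Proof. by elim: s => [|a s IH] //= /andP[Ha Hs]; have := IH Hs; lia. Qed.

(* With positive entries, the reading word is no longer than [weight_bound];
   this bounds the number of times e_q can be applied. *)
Lemma positions_le_weight T :
  (forall w, w \in T -> all (fun x => 0 < x) w) ->
  size (positions T) <= weight_bound T.
Proof.
move=> Hpos.
pose cells := flatten [seq [seq (p, c) | c <- iota 0 (size (nth [::] T p))]
                      | p <- iota 0 (size T)].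
have Hcells : size (positions T) <= size cells.
  apply: uniq_leq_size; first exact: uniq_positions.
  case=> p c; rewrite mem_positions => /andP[Hp Hc].
  apply/flatten_mapP; exists p; first by rewrite mem_iota.
  by apply/mapP; exists c; rewrite ?mem_iota.
apply: leq_trans Hcells _.
rewrite /cells size_flatten /shape -map_comp.
rewrite (eq_map (g := fun p => size (nth [::] T p))); last first.
  by move=> p /=; rewrite size_map size_iota.
rewrite (map_comp size (nth [::] T)) map_nth_iota0 // take_size /weight_bound.
clear cells; elim: T Hpos => [|w T IH] //= Hpos.
apply: leq_add; first by apply/size_le_sumn/Hpos/mem_head.
by apply: IH => w' Hw'; apply/Hpos/mem_behead.
Qed.

(** * Applying e_q as often as possible *)

(* e_q turns a '-' into a '+': on letters it lowers q+1 to q. *)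
Definition lower (q v : nat) : nat := if v == q.+1 then q else v.

Lemma map_lower_id q s : q.+1 \notin s -> map (lower q) s = s.
Proof.
elim: s => [|a s IH] //=; rewrite inE negb_or => /andP[Ha Hs].
by rewrite IH // /lower eq_sym (negbTE Ha).
Qed.

Lemma lower_notin q s : q.+1 \notin map (lower q) s.
Proof.
apply/mapP=> [[a _]]; rewrite /lower; case: eqP => [_|Ha] E.
  by move/eqP: E; rewrite gtn_eqF.
exact: Ha.
Qed.

Definition keeps_minus (q : nat) (z : seq nat) : Prop :=
  forall k pl mi, (red q z k pl mi).2 = mi.

Lemma set_nth_cat (s1 s2 : seq nat) a b :
  set_nth 0 (s1 ++ a :: s2) (size s1) b = s1 ++ b :: s2.
Proof. by elim: s1 => [|x s1 IH] //=; rewrite IH. Qed.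

Lemma last_occurrence (s : seq nat) v : v \in s ->
  exists s1 s2, s = s1 ++ v :: s2 /\ v \notin s2.
Proof.
elim: s => [|a s IH] //; rewrite inE.
case Hv: (v \in s); last by rewrite orbF => /eqP Ev; subst v; exists [::], s; rewrite Hv.
by have [s1 [s2 [-> H]]] := IH Hv; exists (a :: s1), s2.
Qed.

(* If the reading word is x ++ z with no '+' in x, the uncancelled '-' are
   exactly the letters q+1 of x, and e_q lowers them from right to left:
   after a steps the last a of them have become q. *)
Lemma e_pow_prefix q T x z : reading_word T = x ++ z -> q \notin x ->
  keeps_minus q z -> forall a, a <= count_mem q.+1 x ->
  exists T', [/\ e_pow q a T = Some T', map size T' = map size T &
    exists x1 x2, [/\ x = x1 ++ x2,
                      reading_word T' = x1 ++ map (lower q) x2 ++ z &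
                      count_mem q.+1 x1 = count_mem q.+1 x - a]].
Proof.
move=> Hw Hx Hz; elim=> [|a IH] Ha.
  by exists T; split => //; exists x, [::]; rewrite cats0 subn0.
have [T' [He Hs [x1 [x2 [Ex Hw' Hc]]]]] := IH (ltnW Ha).
have Hin : q.+1 \in x1 by apply/count_memPn; rewrite Hc; lia.
have [y1 [y2 [Ey Hy2]]] := last_occurrence Hin.
have Hx1 : q \notin x1 by apply: contra Hx; rewrite Ex mem_cat => ->.
have Hy1 : q \notin y1 by apply: contra Hx1; rewrite Ey mem_cat => ->.
have Hy2q : q \notin y2.
  by apply: contra Hx1; rewrite Ey mem_cat !inE => ->; rewrite !orbT.
have [l Hl] : exists l, (signature q (reading_word T')).2 = size y1 :: l.
  rewrite /signature Hw' Ey.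
  have [l ->] := red_last_minus (map (lower q) x2 ++ z) 0 [::] Hy1 Hy2q Hy2.
  have [pl' ->] := red_cat_no_minus z (0 + size y1 + (size y2).+1) [::]
                     ((0 + size y1) :: l ++ [::]) (lower_notin q x2).
  by rewrite Hz; exists (l ++ [::]).
have Hk : size y1 < size (positions T').
  by rewrite -size_reading_word Hw' Ey !size_cat /=; lia.
exists (update T' (nth (0,0) (positions T') (size y1)) q); split.
- by rewrite /e_pow iterS -/(e_pow q a T) He /= /e_tab Hl.
- by rewrite shape_update ?Hs //; exact: mem_nth.
- exists y1, (q.+1 :: y2 ++ x2); split; first by rewrite Ex Ey -catA.
    rewrite reading_word_update // Hw' Ey -catA /= set_nth_cat /= /lower eqxx.
    by rewrite map_cat (map_lower_id Hy2) -catA.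
  move: Hc; rewrite Ey count_cat /= (count_memPn Hy2) eqxx /=; lia.
Qed.

Lemma e_pow_None_mono q n T : e_pow q n T = None ->
  forall n', n <= n' -> e_pow q n' T = None.
Proof.
move=> H n'; elim: n' => [|n' IH]; first by rewrite leqn0 => /eqP <-.
rewrite leq_eqVlt => /orP[/eqP <- //|Hlt].
by rewrite /e_pow iterS -/(e_pow q n' T) IH.
Qed.

Lemma e_pow_full q T x z : reading_word T = x ++ z -> q \notin x ->
  keeps_minus q z ->
  exists T', [/\ e_pow q (count_mem q.+1 x) T = Some T',
                 e_pow q (count_mem q.+1 x).+1 T = None,
                 map size T' = map size T &
                 reading_word T' = map (lower q) x ++ z].
Proof.
move=> Hw Hx Hz.
have [T' [He Hs [x1 [x2 [Ex Hw' Hc]]]]] := e_pow_prefix Hw Hx Hz (leqnn _).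
rewrite subnn in Hc.
have Hx1 : q.+1 \notin x1 by apply/count_memPn.
have Hx1q : q \notin x1 by apply: contra Hx; rewrite Ex mem_cat => ->.
exists T'; split => //.
- rewrite /e_pow iterS -/(e_pow q _ T) He /= /e_tab /signature Hw'.
  rewrite red_cat_neutral; last first.
    by apply/allP=> v Hv; apply/andP; split; apply/negP=> /eqP E; subst v;
       [rewrite Hv in Hx1q | rewrite Hv in Hx1].
  have [pl' ->] := red_cat_no_minus z (0 + size x1) [::] [::] (lower_notin q x2).
  by rewrite Hz.
- by rewrite Hw' Ex map_cat (map_lower_id Hx1) catA.
Qed.

Lemma emax_eq q T M T' : e_pow q M T = Some T' -> e_pow q M.+1 T = None ->
  M <= weight_bound T -> emax q T = M.
Proof.
move=> H1 H2 Hb; apply/eqP; rewrite eqn_leq; apply/andP; split.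
  apply/bigmax_leqP => a Ha; rewrite leqNgt; apply/negP => Hlt.
  by move: Ha; rewrite (e_pow_None_mono H2 Hlt).
have Hlt : M < (weight_bound T).+1 by [].
by apply: (bigmax_sup (Ordinal Hlt)) => //=; rewrite H1.
Qed.

(** * Semistandard tableaux of shape lambda + rho *)

(* Rows and entries indexed from 0, as stored in the list of rows:
   [row0 t p] is [row t p.+1]. *)
Definition row0 (t : tableau) (p : nat) : seq nat := nth [::] t p.
Definition cell (t : tableau) (p c : nat) : nat := nth 0 (row0 t p) c.

Lemma count_sorted (s : seq nat) a c : sorted leq s ->
  (c < count (fun x => x <= a) s) = (c < size s) && (nth 0 s c <= a).
Proof.
elim: s c => [|x s IH] c //= Hp.
have Hs : sorted leq s by move: Hp; rewrite path_sortedE; [case/andP | exact: leq_trans].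
have Hall : all (leq x) s by apply: order_path_min Hp; exact: leq_trans.
case: (leqP x a) => Hxa /=.
  by case: c => [|c] //=; rewrite add1n !ltnS IH.
have -> : count (fun x0 => x0 <= a) s = 0.
  apply/eqP; rewrite -leqn0 leqNgt -has_count; apply/hasPn => y Hy.
  by have := allP Hall y Hy; lia.
case: c => [|c] //=; first by rewrite [x <= a]leqNgt Hxa.
rewrite ltnS; case Hc: (c < size s) => //=.
have := allP Hall _ (mem_nth 0 Hc) => /= Hle.
by apply/esym/negbTE; rewrite -ltnNge; exact: leq_trans Hxa Hle.
Qed.

Lemma ell_mono r m a b : a <= b -> b <= r.+1 -> ell r m b <= ell r m a.
Proof.
move=> Hab Hb; rewrite /ell (@big_cat_nat _ _ _ b a r.+1) //=.
exact: leq_addl.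
Qed.

Section SemistandardTableau.
Variables (r : nat) (m : nat -> nat) (t : tableau).
Hypothesis Ht : in_B_lambda_rho r m t.

Lemma size_tab : size t = r.
Proof. by case: Ht. Qed.

(* Row p (1-indexed) has length ell p, also for the empty row r+1. *)
Lemma size_row p : 1 <= p <= r.+1 -> size (row t p) = ell r m p.
Proof.
case/andP=> Hp1 Hpr; case: (ltnP r p) => Hrp.
  have -> : p = r.+1 by lia.
  by rewrite /row /= nth_default ?size_tab // /ell big_geq.
by case: Ht => _ H _ _ _; apply: H; rewrite Hp1.
Qed.

Lemma size_row0 p : p < r -> size (row0 t p) = ell r m p.+1.
Proof. by move=> Hp; have := size_row (p := p.+1); apply; lia. Qed.

Lemma cell_range p c : p < r -> c < size (row0 t p) -> 1 <= cell t p c <= r.+1.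
Proof.
case: Ht => _ _ H _ _ Hp Hc.
by have /allP := H p.+1 (ltac:(lia)); apply; exact: mem_nth.
Qed.

Lemma row_le_rS p : all (fun x => x <= r.+1) (row t p).
Proof.
case: (ltnP p.-1 r) => Hp; last by rewrite /row nth_default ?size_tab.
apply/allP => x /(nthP 0) [c Hc <-].
by case/andP: (cell_range Hp Hc).
Qed.

Lemma row0_sorted p : p < r -> sorted leq (row0 t p).
Proof. by case: Ht => _ _ _ H _ Hp; apply: (H p.+1); lia. Qed.

Lemma size_row0_decr p p' : p <= p' -> p' < r -> size (row0 t p') <= size (row0 t p).
Proof. by move=> Hpp' Hp'; rewrite !size_row0; try apply: ell_mono; lia. Qed.

Lemma cell_col_lt p p' c : p < p' -> p' < r -> c < size (row0 t p') ->
  cell t p c < cell t p' c.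
Proof.
elim: p' => [|p' IH] // Hpp' Hp' Hc.
have Hc' : c < size (row0 t p') by apply: leq_trans Hc (size_row0_decr _ _); lia.
have Hstep : cell t p' c < cell t p'.+1 c.
  by case: Ht => _ _ _ _ H; apply: (H p'.+1) => //; lia.
case: (ltngtP p p') => H; [|lia|by subst].
by have := IH H (ltac:(lia)) Hc'; lia.
Qed.

(* By column strictness, the entries of row p (0-indexed) exceed p. *)
Lemma row_lt_cell p c : p < r -> c < size (row0 t p) -> p < cell t p c.
Proof.
elim: p => [|p IH] Hp Hc; first by have := cell_range Hp Hc; lia.
have Hc' : c < size (row0 t p) by apply: leq_trans Hc (size_row0_decr _ _); lia.
exact: leq_ltn_trans (IH (ltnW Hp) Hc') (cell_col_lt (ltnSn p) Hp Hc).
Qed.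

Lemma cell_bounds p c : p < r -> c < size (row0 t p) -> p < cell t p c <= r.+1.
Proof.
move=> Hp Hc; rewrite row_lt_cell //=.
by case/andP: (cell_range Hp Hc).
Qed.

End SemistandardTableau.

(** * The stage tableaux *)

(* [stage t i q] replaces, in row p (1-indexed) of t, each entry x <= i by p
   and each entry i+1 by max p (q+1); it is the tableau reached by the BZL
   algorithm just before the step e_q of the i-th block of the long word. *)
Definition stage_entry (i q p x : nat) : nat :=
  if x <= i then p else if x == i.+1 then maxn p q.+1 else x.

Definition stage (t : tableau) (i q : nat) : tableau :=
  mkseq (fun p => map (stage_entry i q p.+1) (nth [::] t p)) (size t).

Definition nle (t : tableau) (p k : nat) : nat := count (fun x => x <= k) (row t p).

Definition column_word (T : tableau) (c : nat) : seq nat :=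
  [seq entry T (p, c) | p <- iota 0 (size T) & c < size (nth [::] T p)].

Lemma reading_word_columns T :
  reading_word T = flatten [seq column_word T c | c <- rev (iota 0 (ncols T))].
Proof.
rewrite /reading_word /positions map_flatten; congr flatten.
by rewrite -map_comp; apply: eq_map => c /=; rewrite /column_word -map_comp.
Qed.

Lemma nth_stage t i q p :
  nth [::] (stage t i q) p = map (stage_entry i q p.+1) (nth [::] t p).
Proof.
case: (ltnP p (size t)) => Hp; first by rewrite nth_mkseq.
by rewrite !nth_default // size_mkseq.
Qed.

Lemma shape_stage t i q : map size (stage t i q) = map size t.
Proof.
apply: (@eq_from_nth _ 0); rewrite !size_map ?size_mkseq ?size_iota // => p Hp.
by rewrite !(nth_map [::]) ?size_mkseq // nth_stage size_map.
Qed.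

Definition stage_column (r : nat) (t : tableau) (i q c : nat) : seq nat :=
  [seq stage_entry i q p.+1 (cell t p c) | p <- iota 0 r & c < size (row0 t p)].

Section Stages.
Variables (r : nat) (m : nat -> nat) (t : tableau).
Hypothesis Ht : in_B_lambda_rho r m t.

Lemma reading_word_stage i q : reading_word (stage t i q) =
  flatten [seq stage_column r t i q c | c <- rev (iota 0 (ncols t))].
Proof.
rewrite reading_word_columns /ncols shape_stage; congr flatten.
apply: eq_map => c; rewrite /column_word /stage_column size_mkseq (size_tab Ht).
rewrite (@eq_filter _ _ (fun p => c < size (row0 t p))); last first.
  by move=> p; rewrite nth_stage size_map.
apply/eq_in_map => p; rewrite mem_filter mem_iota /= => /andP[Hc Hp].
by rewrite /entry /= nth_stage (nth_map 0).
Qed.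

Lemma stage_ext i q i' q' :
  (forall p x, p < x -> stage_entry i q p.+1 x = stage_entry i' q' p.+1 x) ->
  stage t i q = stage t i' q'.
Proof.
move=> H; rewrite /stage /mkseq; apply/eq_in_map => p.
rewrite mem_iota /= (size_tab Ht) => Hp.
apply/eq_in_map => x /(nthP 0) [c Hc Ex].
by apply: H; rewrite -Ex; case/andP: (cell_bounds Ht Hp Hc).
Qed.

(* The run starts at stage 0 0 ... *)
Lemma stage00 : stage t 0 0 = t.
Proof.
rewrite -{2}(mkseq_nth [::] t) /stage /mkseq; apply/eq_in_map => p; rewrite mem_iota /= => Hp.
rewrite -{2}(map_id (nth [::] t p)); apply/eq_in_map => x /(nthP 0) [c Hc Ex].
rewrite (size_tab Ht) in Hp.
have := cell_bounds Ht Hp Hc; rewrite /cell /row0 Ex /stage_entry.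
by case: ifP => ?; try case: ifP => ?; lia.
Qed.

(* ... and the end of block i is the start of block i+1. *)
Lemma stage_next i : stage t i 0 = stage t i.+1 i.+1.
Proof.
apply: stage_ext => p x Hpx; rewrite /stage_entry.
by case: ifP => ?; try case: ifP => ?; try case: ifP => ?; try case: ifP => ?; lia.
Qed.

Lemma lt_nle p k c :
  (c < nle t p.+1 k) = (c < size (row0 t p)) && (cell t p c <= k).
Proof.
case: (ltnP p r) => Hp; first exact: count_sorted (row0_sorted Ht Hp).
by rewrite /nle /row /cell /row0 /= nth_default ?(size_tab Ht).
Qed.

End Stages.

(** * One step of the BZL algorithm on a stage tableau *)

Lemma count_lt_iota n L : (count (fun c => ~~ (c < L)) (iota 0 n) == 0) = (n <= L).
Proof.
rewrite eqn0Ngt -has_count; apply/hasPn/idP => [H|Hn c].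
  rewrite leqNgt; apply/negP => HL.
  by have := H L (ltac:(rewrite mem_iota; lia)); rewrite ltnn.
by rewrite mem_iota /= negbK => Hc; lia.
Qed.

Section StageStep.
Variables (r : nat) (m : nat -> nat) (t : tableau) (i q : nat).
Hypotheses (Ht : in_B_lambda_rho r m t) (Hq1 : 1 <= q) (Hqi : q <= i) (Hir : i <= r).

Lemma lt_nle_q c :
  (c < nle t q i) = (c < size (row0 t q.-1)) && (cell t q.-1 c <= i).
Proof. by rewrite -(lt_nle Ht) prednK. Qed.

Lemma tail_above p c : p < r -> c < size (row0 t p) -> nle t q i <= c ->
  p = q.-1 -> i < cell t p c.
Proof.
move=> Hp Hc Hn Ep; subst p; rewrite ltnNge; apply/negP => H.
by move: Hn; rewrite leqNgt lt_nle_q Hc H.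
Qed.

Lemma tail_above_next p c : p < r -> c < size (row0 t p) -> nle t q i <= c ->
  p = q -> i.+1 < cell t p c.
Proof.
move=> Hp Hc Hn Ep; subst p.
have Hc' : c < size (row0 t q.-1) by apply: leq_trans Hc (size_row0_decr Ht _ _); lia.
have := tail_above (p := q.-1) (ltac:(lia)) Hc' Hn erefl.
have := cell_col_lt Ht (p := q.-1) (p' := q) (ltac:(lia)) Hp Hc.
lia.
Qed.

Lemma head_below p c : p < r -> c < size (row0 t p) -> c < nle t q i ->
  p <= q.-1 -> cell t p c <= i.
Proof.
move=> Hp Hc Hn Hpq; move: Hn; rewrite lt_nle_q => /andP[Hc' Hx].
rewrite leq_eqVlt in Hpq; case/orP: Hpq => [/eqP->//|Hlt].
by have := cell_col_lt Ht Hlt (ltac:(lia)) Hc'; lia.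
Qed.

Lemma stage_column_tail_noq c : nle t q i <= c -> q \notin stage_column r t i q c.
Proof.
move=> Hn; apply/mapP => [[p]]; rewrite mem_filter mem_iota /= => /andP[Hc Hp].
have HA := tail_above Hp Hc Hn; have HD := cell_bounds Ht Hp Hc.
by rewrite /stage_entry; case: ifP => H1; [|case: ifP => H2]; lia.
Qed.

Lemma stage_column_tail_lower c : nle t q i <= c ->
  stage_column r t i q.-1 c = map (lower q) (stage_column r t i q c).
Proof.
move=> Hn; rewrite /stage_column -map_comp; apply/eq_in_map => p.
rewrite mem_filter mem_iota /= => /andP[Hc Hp].
have HA := tail_above Hp Hc Hn; have HB := tail_above_next Hp Hc Hn.
have HD := cell_bounds Ht Hp Hc.
rewrite /stage_entry /lower /=.
by case: ifP => H1; case: ifP => H2 //; try case: ifP => H3; try case: ifP => H4; lia.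
Qed.

Lemma stage_column_head_same c : c < nle t q i ->
  stage_column r t i q.-1 c = stage_column r t i q c.
Proof.
move=> Hn; apply/eq_in_map => p; rewrite mem_filter mem_iota /= => /andP[Hc Hp].
have HC := head_below Hp Hc Hn; have HD := cell_bounds Ht Hp Hc.
by rewrite /stage_entry; case: ifP => H1 //; case: ifP => H2 //; lia.
Qed.

Lemma neutral_map (f : nat -> nat) (s : seq nat) :
  (forall p, p \in s -> (f p != q) && (f p != q.+1)) -> neutral q (map f s).
Proof. by move=> H; apply/allP=> a /mapP [p Hp ->]; apply: H. Qed.

Lemma iota_rows_split : iota 0 r = iota 0 q.-1 ++ q.-1 :: iota q (r - q).
Proof.
have -> : iota 0 r = iota 0 (q.-1 + (r - q).+1) by congr iota; lia.
by rewrite iotaD add0n /= prednK.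
Qed.

Lemma stage_column_head_block c : c < nle t q i -> exists u1 u3,
  [/\ stage_column r t i q c =
        u1 ++ q :: (if c < nle t q.+1 i.+1 then q.+1 :: u3 else u3),
      neutral q u1 & neutral q u3].
Proof.
move=> Hn; move: (Hn); rewrite lt_nle_q => /andP[Hcq Hxq].
rewrite /stage_column iota_rows_split filter_cat map_cat /= Hcq /=.
have -> : stage_entry i q q.-1.+1 (cell t q.-1 c) = q.
  by rewrite prednK // /stage_entry Hxq.
set u1 := map _ (filter _ (iota 0 q.-1)).
have Hu1 : neutral q u1.
  apply: neutral_map => p; rewrite mem_filter mem_iota /= => /andP[Hc Hp].
  have HC := head_below (p := p) (ltac:(lia)) Hc Hn (ltac:(lia)).
  by rewrite /stage_entry HC; apply/andP; split; apply/negP => /eqP; lia.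
rewrite (lt_nle Ht); case: (ltnP q r) => Hqr; last first.
  exists u1, [seq stage_entry i q p.+1 (cell t p c) | p <- iota q (r - q)
              & c < size (row0 t p)]; split => //.
    by rewrite /row0 nth_default ?(size_tab Ht).
  by rewrite (_ : r - q = 0) //; lia.
rewrite (_ : iota q (r - q) = q :: iota q.+1 (r - q.+1)); last first.
  by rewrite (_ : r - q = (r - q.+1).+1) //; lia.
set u3 := [seq stage_entry i q p.+1 (cell t p c) | p <- iota q.+1 (r - q.+1)
           & c < size (row0 t p)].
have Hu3 : neutral q u3.
  apply: neutral_map => p; rewrite mem_filter mem_iota /= => /andP[Hc Hp].
  have HD := cell_bounds Ht (p := p) (ltac:(lia)) Hc.
  rewrite /stage_entry; apply/andP; split; apply/negP => /eqP;
    by case: ifP => H1; try case: ifP => H2; lia.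
rewrite /=; case Hcs: (c < size (row0 t q)) => /=; last by exists u1, u3.
have HD := cell_bounds Ht Hqr Hcs.
case Hx: (cell t q c <= i.+1).
  exists u1, u3; split => //.
  rewrite (_ : stage_entry i q q.+1 (cell t q c) = q.+1) //.
  by rewrite /stage_entry; case: ifP => // H1; case: ifP => H2; lia.
exists u1, (cell t q c :: u3); split => //.
  rewrite (_ : stage_entry i q q.+1 (cell t q c) = cell t q c) //.
  by rewrite /stage_entry; case: ifP => H1; [|case: ifP => H2]; lia.
rewrite /neutral /=; apply/andP; split; last exact: Hu3.
by apply/andP; split; apply/negP => /eqP; lia.
Qed.

Lemma mem_minus_head_column c : c < nle t q i ->
  (q.+1 \in stage_column r t i q c) = (c < nle t q.+1 i.+1).
Proof.
by move=> Hc; have [u1 [u3 [-> H1 H3]]] := stage_column_head_block Hc; rewrite block_mem.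
Qed.

Let N := ncols t.
Let n := nle t q i.

Lemma nle_le_ncols : n <= N.
Proof.
apply: leq_trans (count_size _ _) _; apply/foldr_maxn_ub/map_f/mem_nth.
by rewrite (size_tab Ht); lia.
Qed.

(* The reading word splits into the columns right of column n, which carry no
   '+', and the columns left of it, which are q-blocks. *)
Let tail_word := flatten [seq stage_column r t i q c | c <- rev (iota n (N - n))].
Let head_word := flatten [seq stage_column r t i q c | c <- rev (iota 0 n)].

(* Columns are read right to left: first the tail columns, then the head. *)
Lemma rev_iota_split : rev (iota 0 N) = rev (iota n (N - n)) ++ rev (iota 0 n).
Proof. by rewrite -rev_cat -{1}(subnKC nle_le_ncols) iotaD add0n. Qed.

Lemma reading_word_stage_split : reading_word (stage t i q) = tail_word ++ head_word.
Proof. by rewrite (reading_word_stage Ht) rev_iota_split map_cat flatten_cat. Qed.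

Lemma reading_word_stage_pred :
  reading_word (stage t i q.-1) = map (lower q) tail_word ++ head_word.
Proof.
rewrite (reading_word_stage Ht) rev_iota_split map_cat flatten_cat map_flatten -map_comp.
congr (flatten _ ++ flatten _); apply/eq_in_map => c; rewrite mem_rev mem_iota => /andP[H1 H2].
  exact: stage_column_tail_lower.
exact: stage_column_head_same.
Qed.

Lemma tail_word_noq : q \notin tail_word.
Proof.
apply/negP => /flatten_mapP [c]; rewrite mem_rev mem_iota => /andP[Hc _].
by apply/negP; apply: stage_column_tail_noq.
Qed.

Lemma head_columns_blocks u :
  u \in [seq stage_column r t i q c | c <- rev (iota 0 n)] -> block q u.
Proof.
case/mapP => c; rewrite mem_rev mem_iota /= => Hc ->.
have [u1 [u3 [E H1 H3]]] := stage_column_head_block Hc.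
by exists u1, u3, (c < nle t q.+1 i.+1).
Qed.

Lemma head_word_keeps_minus : keeps_minus q head_word.
Proof.
move=> k pl mi; have [pl' [E _]] := red_cat_blocks [::] k pl mi head_columns_blocks.
by move: E; rewrite cats0 => ->.
Qed.

(* Stage tableaux have positive entries (needed to bound [emax]). *)
Lemma stage_entries_pos w : w \in stage t i q -> all (fun x => 0 < x) w.
Proof.
case/(nthP [::]) => [p Hp <-]; rewrite nth_stage; apply/allP => a /mapP [x Hx ->].
rewrite size_mkseq (size_tab Ht) in Hp.
case/(nthP 0): Hx => [c Hc Ex].
have := cell_bounds Ht Hp Hc; rewrite /cell /row0 Ex /stage_entry.
by case: ifP => ?; try case: ifP => ?; lia.
Qed.

Lemma stage_emax :
  emax q (stage t i q) = count_mem q.+1 tail_word /\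
  odflt (stage t i q) (e_pow q (emax q (stage t i q)) (stage t i q)) = stage t i q.-1.
Proof.
have [T' [H1 H2 H3 H4]] :=
  e_pow_full reading_word_stage_split tail_word_noq head_word_keeps_minus.
have Hb : count_mem q.+1 tail_word <= weight_bound (stage t i q).
  apply: leq_trans (positions_le_weight stage_entries_pos).
  rewrite -size_reading_word reading_word_stage_split size_cat.
  exact: leq_trans (count_size _ _) (leq_addr _ _).
have He := emax_eq H1 H2 Hb; split => //.
rewrite He H1 /=; apply: reading_word_inj; first by rewrite H3 !shape_stage.
by rewrite H4 reading_word_stage_pred.
Qed.

(* f_q kills stage q exactly when every head column contains q+1. *)
Lemma stage_f_None :
  (f_tab q (stage t i q) == None) = (nle t q i <= nle t q.+1 i.+1).
Proof.
rewrite /f_tab /signature reading_word_stage_split.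
have [l ->] := red_cat_no_plus head_word 0 [::] tail_word_noq.
have [pl' [E Hs]] :=
  red_cat_blocks [::] (0 + size tail_word) [::] (l ++ [::]) head_columns_blocks.
move: E; rewrite cats0 => -> /=.
transitivity (size pl' == 0); first by case: pl' {Hs}.
rewrite Hs add0n count_map count_rev -(count_lt_iota n (nle t q.+1 i.+1)).
congr (_ == 0); apply: eq_in_count => c; rewrite mem_iota /= => Hc.
by rewrite mem_minus_head_column.
Qed.

End StageStep.

(** * The BZL run along the long word *)

Fixpoint bzl_final (w : seq nat) (t : tableau) : tableau :=
  match w with
  | [::] => t
  | i :: w' => bzl_final w' (odflt t (e_pow i (emax i t) t))
  end.

Lemma bzl_run_cat u v t : bzl_run (u ++ v) t = bzl_run u t ++ bzl_run v (bzl_final u t).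
Proof. by elim: u t => [|a u IH] t //=; rewrite IH. Qed.

Lemma bzl_final_cat u v t : bzl_final (u ++ v) t = bzl_final v (bzl_final u t).
Proof. by elim: u t => [|a u IH] t //=; rewrite IH. Qed.

Lemma iota1S n : iota 1 n.+1 = iota 1 n ++ [:: n.+1].
Proof. by have := iotaD 1 n 1; rewrite addn1 add1n. Qed.

Lemma long_wordS n : long_word n.+1 = long_word n ++ rev (iota 1 n.+1).
Proof.
rewrite {1}/long_word {1}iota1S map_cat flatten_cat.
by congr (_ ++ _); rewrite /= cats0.
Qed.

Section Run.
Variables (r : nat) (m : nat -> nat) (t : tableau).
Hypothesis Ht : in_B_lambda_rho r m t.

Lemma bzl_run_block i : i <= r -> forall q, q <= i ->
  map snd (bzl_run (rev (iota 1 q)) (stage t i q)) = map (stage t i) (rev (iota 1 q))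
  /\ bzl_final (rev (iota 1 q)) (stage t i q) = stage t i 0.
Proof.
move=> Hir; elim=> [|q IH] Hq //.
rewrite iota1S rev_cat /=.
have [-> ->] := stage_emax Ht (ltn0Sn q) Hq Hir.
by have [-> ->] := IH (ltnW Hq).
Qed.

Lemma bzl_run_long_word n : n <= r ->
  map snd (bzl_run (long_word n) t) =
    flatten [seq map (stage t i) (rev (iota 1 i)) | i <- iota 1 n]
  /\ bzl_final (long_word n) t = stage t n 0.
Proof.
elim: n => [|n IH] Hn; first by rewrite /= (stage00 Ht).
have [IH1 IH2] := IH (ltnW Hn).
rewrite long_wordS bzl_run_cat bzl_final_cat map_cat IH1 IH2 (stage_next Ht).
have [-> ->] := bzl_run_block Hn (leqnn _).
by rewrite [in RHS]iota1S map_cat flatten_cat /= cats0.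
Qed.

End Run.

Lemma sumn_iota1 n : sumn (iota 1 n) = (n.+1 * n) %/ 2.
Proof.
have H : (sumn (iota 1 n)).*2 = n.+1 * n.
  elim: n => [|n IH] //; rewrite iota1S sumn_cat /= addn0 doubleD IH; lia.
by rewrite -H -muln2 mulnK.
Qed.

Lemma nth_tri_index (T : Type) (x0 : T) (F : nat -> seq T) r i j :
  (forall k, size (F k) = k) -> 1 <= j -> j <= i -> i <= r ->
  nth x0 (flatten [seq F k | k <- iota 1 r]) (tri_index i j) = nth x0 (F i) j.-1.
Proof.
move=> HF Hj Hji Hir.
have -> : iota 1 r = iota 1 i.-1 ++ i :: iota i.+1 (r - i).
  have -> : r = i.-1 + (r - i).+1 by lia.
  by rewrite iotaD /=; congr (_ ++ _ :: iota _ _); lia.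
have Hs : size (flatten [seq F k | k <- iota 1 i.-1]) = (i * i.-1) %/ 2.
  rewrite size_flatten /shape -map_comp (eq_map (g := id)) // map_id sumn_iota1.
  by rewrite prednK; lia.
rewrite map_cat flatten_cat nth_cat Hs /tri_index.
set a := (i * i.-1) %/ 2.
rewrite (_ : (a + j - 1 < a) = false); last by lia.
rewrite (_ : a + j - 1 - a = j.-1); last by lia.
by rewrite /= nth_cat HF (_ : j.-1 < i = true) //; lia.
Qed.

(** * Rules (B-I) and (B-II) as the same comparison of row counts *)

Lemma nth_snd (A B : Type) (s : seq (A * B)) a b k :
  (nth (a, b) s k).2 = nth b (map snd s) k.
Proof. by elim: s k => [|x s IH] [|k] //=. Qed.

Lemma nth_rev_iota1 i j : 1 <= j -> j <= i -> nth 0 (rev (iota 1 i)) j.-1 = i - j + 1.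
Proof. by move=> Hj Hji; rewrite nth_rev ?size_iota ?nth_iota; lia. Qed.

Lemma long_word_tri_index r i j : 1 <= j -> j <= i -> i <= r ->
  nth 0 (long_word r) (tri_index i j) = i - j + 1.
Proof.
move=> Hj Hji Hir; rewrite /long_word (nth_tri_index 0 (F := fun k => rev (iota 1 k))) //.
  exact: nth_rev_iota1.
by move=> k; rewrite size_rev size_iota.
Qed.

Lemma bzl_state_tri_index r m t i j : in_B_lambda_rho r m t ->
  1 <= j -> j <= i -> i <= r ->
  (nth (0, t) (bzl_run (long_word r) t) (tri_index i j)).2 = stage t i (i - j + 1).
Proof.
move=> Ht Hj Hji Hir; rewrite nth_snd; have [-> _] := bzl_run_long_word Ht (leqnn r).
rewrite (nth_tri_index t (F := fun k => map (stage t k) (rev (iota 1 k)))) //.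
  by rewrite (nth_map 0) ?nth_rev_iota1 // size_rev size_iota; lia.
by move=> k; rewrite size_map size_rev size_iota.
Qed.

Lemma boxed_BI_nle r m t i j : in_B_lambda_rho r m t ->
  1 <= j -> j <= i -> i <= r ->
  boxed_BI r t i j = (nle t (i - j + 1) i <= nle t (i - j + 1).+1 i.+1).
Proof.
move=> Ht Hj Hji Hir.
by rewrite /boxed_BI long_word_tri_index // (bzl_state_tri_index Ht) // (stage_f_None Ht) //; lia.
Qed.

Lemma count_gtn (s : seq nat) k :
  count (fun x => k.+1 <= x) s = size s - count (fun x => x <= k) s.
Proof.
rewrite -(count_predC (fun x => x <= k) s) addKn.
by apply: eq_count => x /=; rewrite ltnNge.
Qed.

Lemma bold_b_nle r m t p k : in_B_lambda_rho r m t -> 1 <= p <= r.+1 ->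
  bold_b r t p k = ell r m p - nle t p k.
Proof.
move=> Ht Hp; rewrite /bold_b /nle -(size_row Ht Hp).
case: ifP => [/orP[/eqP Ep|/eqP Ek]|_]; last exact: count_gtn.
  by rewrite /row Ep /= nth_default ?(size_tab Ht).
by move: (row_le_rS Ht p); rewrite -Ek all_count => /eqP ->; rewrite subnn.
Qed.

(* Rule (B-II) for bold a_{q,i} is the same comparison: theta_q cancels the
   difference of the row lengths ell q and ell (q+1). *)
Lemma boxed_BII_nle r m t q i : in_B_lambda_rho r m t ->
  1 <= q -> q <= i -> i <= r ->
  boxed_BII r m t q i = (nle t q i <= nle t q.+1 i.+1).
Proof.
move=> Ht Hq Hqi Hir.
have Hn : nle t q i <= ell r m q by rewrite -(size_row Ht) ?count_size //; lia.
have HL : nle t q.+1 i.+1 <= ell r m q.+1 by rewrite -(size_row Ht) ?count_size //; lia.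
have Hell : ell r m q.+1 <= ell r m q by apply: ell_mono; lia.
by rewrite /boxed_BII /theta (bold_b_nle i Ht) ?(bold_b_nle i.+1 Ht); lia.
Qed.

Theorem mainTheorem4 (r : nat) (m : nat -> nat) (t : tableau) :
  1 <= r -> in_B_lambda_rho r m t ->
  forall i j : nat, 1 <= j -> j <= i -> i <= r ->
    boxed_BI r t i j = boxed_BII r m t (i - j + 1) i.
Proof.
move=> _ Ht i j Hj Hji Hir.
by rewrite (boxed_BI_nle Ht) // (boxed_BII_nle Ht) //; lia.
Qed.
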